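(* Assume $\mathbf{P.0}$ has an optimal solution, with optimal value $OPT$. Let $A^g$ be the output of the greedy algorithm on the family $\mathcal{I}$. Then $|A^g|\le b$, $\lfloor\alpha_t\rfloor\le |A^g\cap V_t|\le\lceil\beta_t\rceil$ for all $t\in[m]$, and $$f(A^g)\ge \frac{(1-1/e)^2}{2}\,OPT.$$
   Context: Let $V$ be a finite set of $n$ items and $f:2^V\to\mathbb{R}_{\ge 0}$ a non-negative monotone submodular function. Items are divided into pairwise disjoint groups $V_1,\dots,V_m$ with $V=V_1\cup\dots\cup V_m$; $\alpha,\beta\in\mathbb{R}_{\ge 0}^m$ and $b$ is a positive integer. Let $\mathcal{F}=\{S\subseteq V: |S|\le b\}$. Problem $\mathbf{P.0}$: maximize $\sum_{S\in\mathcal{F}} x_S f(S)$ over $x\in[0,1]^{\mathcal{F}}$ subject to $\alpha_t\le \sum_{S\in\mathcal{F}} x_S |S\cap V_t|\le \beta_t$ for all $t\in[m]$ and $\sum_{S\in\mathcal{F}}x_S\le 1$; $OPT$ denotes its optimal value. Let $\mathcal{I}$ be the family of sets $S\subseteq V$ such that $|S\cap V_t|\le\lceil\beta_t\rceil$ for all $t\in[m]$ and $\sum_{t\in[m]}\max\{\lfloor\alpha_t\rfloor,|S\cap V_t|\}\le b$ (this family is the set of feasible solutions of problem $\mathbf{P.3}$: maximize $f(S)$ over $S\in\mathcal{I}$). The greedy algorithm on $\mathcal{I}$: start with $S=\emptyset$; while there exists $e\in V\setminus S$ with $S\cup\{e\}\in\mathcal{I}$, add to $S$ such an $e$ maximizing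 $f(S\cup\{e\})-f(S)$ (ties broken arbitrarily); when no such $e$ exists, output $A^g=S$. *)

From HB Require Import structures.
From mathcomp Require Import all_boot all_order all_algebra.
From mathcomp Require Import reals.
From mathcomp Require Import sequences.
Set Implicit Arguments. Unset Strict Implicit. Unset Printing Implicit Defensive.
Import Order.TTheory GRing.Theory Num.Theory.
Local Open Scope ring_scope.

Section Defs.
Variables (R : realType) (V : finType) (m : nat).

Definition nonneg_fun (f : {set V} -> R) := forall S, 0 <= f S.
Definition monotone_fun (f : {set V} -> R) :=
  forall A B : {set V}, A \subset B -> f A <= f B.
Definition submodular_fun (f : {set V} -> R) :=
  forall A B : {set V}, f (A :|: B) + f (A :&: B) <= f A + f B.

(* groups V_1..V_m given by a labelling grp : V -> 'I_m (a partition of V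
   into pairwise disjoint, possibly empty, groups) *)
Definition group_of (grp : V -> 'I_m) (t : 'I_m) : {set V} :=
  [set v | grp v == t].

(* Feasibility of x for problem P.0 (variables indexed by F = {S : |S| <= b};
   values of x outside F are irrelevant) *)
Definition P0_feasible (grp : V -> 'I_m) (alpha beta : 'I_m -> R) (b : nat)
  (x : {set V} -> R) : Prop :=
  [/\ (forall S : {set V}, (#|S| <= b)%N -> 0 <= x S <= 1),
      (forall t : 'I_m,
          alpha t <= \sum_(S : {set V} | (#|S| <= b)%N) x S * (#|S :&: group_of grp t|)%:R
          <= beta t)
    & \sum_(S : {set V} | (#|S| <= b)%N) x S <= 1].

Definition P0_value (f : {set V} -> R) (b : nat) (x : {set V} -> R) : R :=
  \sum_(S : {set V} | (#|S| <= b)%N) x S * f S.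

Definition P0_optimal (f : {set V} -> R) (grp : V -> 'I_m) (alpha beta : 'I_m -> R)
  (b : nat) (x : {set V} -> R) : Prop :=
  P0_feasible grp alpha beta b x /\
  forall y, P0_feasible grp alpha beta b y -> P0_value f b y <= P0_value f b x.

Definition in_I (grp : V -> 'I_m) (alpha beta : 'I_m -> R) (b : nat) (S : {set V}) : Prop :=
  (forall t : 'I_m, (#|S :&: group_of grp t|%:Z <= Num.ceil (beta t))%R) /\
  (\sum_(t < m) Num.max (Num.floor (alpha t)) (#|S :&: group_of grp t|%:Z) <= b%:Z)%R.

(* s = [e_1; ...; e_k] is a run of the greedy algorithm on I (ties broken
   arbitrarily): each e_{i+1} is an element outside the current set S_i with
   S_i + e_{i+1} in I maximizing the marginal gain among all such elements,
   and the algorithm stops when no feasible element can be added. *)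
Definition greedy_run (f : {set V} -> R) (grp : V -> 'I_m) (alpha beta : 'I_m -> R)
  (b : nat) (s : seq V) : Prop :=
  (forall (s1 s2 : seq V) (ei : V), s = s1 ++ ei :: s2 ->
     let Si := [set x in s1] in
     [/\ ei \notin Si,
         in_I grp alpha beta b (ei |: Si)
       & forall e, e \notin Si -> in_I grp alpha beta b (e |: Si) ->
           f (e |: Si) - f Si <= f (ei |: Si) - f Si]) /\
  (forall e, e \notin [set x in s] -> ~ in_I grp alpha beta b (e |: [set x in s])).
End Defs.

From HB Require Import structures.
From mathcomp Require Import all_boot all_order all_algebra.
From mathcomp Require Import reals sequences exp.
From mathcomp Require Import zify ring lra.
Import Order.TTheory GRing.Theory Num.Theory.
Local Open Scope ring_scope.
Set Implicit Arguments. Unset Strict Implicit. Unset Printing Implicit Defensive.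

(* Let w(e) = sum_{S ∋ e} x_S be the coverage of e by the fractional solution x.
   Call e blocked at A in I if e ∉ A and A + e ∉ I.  Every blocked element lies in a group
   that is full (|A ∩ V_t| >= ceil beta_t >= w(V_t)) or whose floor is met while the budget
   b, which bounds the total coverage, is exhausted; hence the blocked elements carry
   coverage at most |A|.  Along the greedy run an element blocked at step j has marginal
   gain at most the j-th greedy increment, and increments decrease, so charging gives
   sum_{e ∉ A^g} w(e) (f(A^g + e) - f(A^g)) <= f(A^g).  As
   f(S) <= f(A^g) + sum_{e ∈ S \ A^g} (f(A^g + e) - f(A^g)), this yields OPT <= 2 f(A^g),
   stronger than the claim since (1 - 1/e)^2 / 2 <= 1/2.  Maximality of A^g in I gives
   the group bounds. *)

Section Submodular.
Variables (R : realType) (V : finType) (f : {set V} -> R).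

Definition gain (A : {set V}) (e : V) : R := f (e |: A) - f A.

Hypothesis f_submod : submodular_fun f.

Lemma gain_antitone (A B : {set V}) (e : V) :
  A \subset B -> e \notin B -> gain B e <= gain A e.
Proof.
move=> sAB eB; have := f_submod (e |: A) B.
have -> : (e |: A) :|: B = e |: B by rewrite -setUA (setUidPr sAB).
have -> : (e |: A) :&: B = A.
  rewrite setIUl (setIidPl sAB) (_ : [set e] :&: B = set0) ?set0U //.
  by apply/setP=> v; rewrite !inE; case: eqP => // ->; rewrite (negbTE eB).
rewrite /gain; lra.
Qed.

Lemma le_sum_gain (A B : {set V}) :
  [disjoint B & A] -> f (B :|: A) <= f A + \sum_(e in B) gain A e.
Proof.
elim: {B}_.+1 {-2}B (ltnSn #|B|) => // n IH B cardB dBA.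
have [->|[e eB]] := set_0Vmem B; first by rewrite set0U big_set0 addr0.
have eA : e \notin A by rewrite (disjointFr dBA).
have dBA' : [disjoint B :\ e & A] by apply: disjointWl dBA; apply: subD1set.
have IHe := IH (B :\ e) (leq_trans (proper_card (properD1 eB)) cardB) dBA'.
have gain_e := @gain_antitone A ((B :\ e) :|: A) e (subsetUr _ _).
rewrite !inE eqxx eA /= in gain_e.
rewrite (big_setD1 e eB) /= -{1}(setD1K eB) -setUA.
by move: IHe (gain_e isT); rewrite /gain; lra.
Qed.

End Submodular.

Section GreedyCharging.
Variables (R : realType) (V : finType) (f : {set V} -> R) (P : pred {set V}).

Definition greedy_seq (s : seq V) : Prop :=
  (forall (s1 s2 : seq V) (ei : V), s = s1 ++ ei :: s2 ->
     let Si := [set x in s1] in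
     [/\ ei \notin Si, P (ei |: Si)
       & forall e, e \notin Si -> P (e |: Si) -> gain f Si e <= gain f Si ei]) /\
  (forall e, e \notin [set x in s] -> ~~ P (e |: [set x in s])).

Definition blocked (A : {set V}) : {set V} := [set e | (e \notin A) && ~~ P (e |: A)].

Hypotheses (f_mono : monotone_fun f) (f_submod : submodular_fun f).
Hypotheses (P_down : forall A B : {set V}, B \subset A -> P A -> P B) (P0 : P set0).
Variable w : V -> R.
Hypotheses (w_ge0 : forall e, 0 <= w e)
  (blocked_weight : forall A, P A -> \sum_(e in blocked A) w e <= #|A|%:R).
Variable s : seq V.
Hypothesis s_greedy : greedy_seq s.

Let prefix j := [set v in take j s].
Let incr j := f (prefix j.+1) - f (prefix j).

Lemma prefix0 : prefix 0 = set0.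
Proof. by apply/setP => v; rewrite !inE take0. Qed.

Lemma prefix_oversize j : (size s <= j)%N -> prefix j = [set v in s].
Proof. by move=> hj; rewrite /prefix take_oversize. Qed.

Lemma greedy_step j : (j < size s)%N -> exists e,
  [/\ e \notin prefix j, prefix j.+1 = e |: prefix j, P (prefix j.+1)
    & forall e', e' \notin prefix j -> P (e' |: prefix j) -> gain f (prefix j) e' <= incr j].
Proof.
move=> hj; have x0 : V by case: (s) hj.
set e := nth x0 s j.
have def_s : s = take j s ++ e :: drop j.+1 s.
  by rewrite -[s in LHS](cat_take_drop j) (drop_nth x0 hj).
have def_prefix : prefix j.+1 = e |: prefix j.
  by apply/setP => v; rewrite /prefix (take_nth x0 hj) !inE mem_rcons in_cons.
have [eS Pe max_e] := s_greedy.1 _ _ _ def_s.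
by exists e; rewrite /incr def_prefix; split.
Qed.

Lemma prefix_subS j : prefix j \subset prefix j.+1.
Proof.
have [hj|hj] := ltnP j (size s); last by rewrite !prefix_oversize // (leq_trans hj).
by have [e [_ -> _ _]] := greedy_step hj; apply: subsetUr.
Qed.

Lemma P_prefix j : (j <= size s)%N -> P (prefix j).
Proof.
case: j => [|j] hj; first by rewrite prefix0.
by have [e []] := greedy_step hj.
Qed.

Lemma incr_ge0 j : 0 <= incr j.
Proof. by rewrite subr_ge0; apply/f_mono/prefix_subS. Qed.

Lemma incr_antitone j : incr j.+1 <= incr j.
Proof.
have [hj1|hj1] := ltnP j.+1 (size s); last first.
  rewrite [incr j.+1]/incr !prefix_oversize ?(leqW hj1) // subrr; exact: incr_ge0.
have [e' [e'S def_prefix Pe' _]] := greedy_step hj1.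
have [_ [_ _ _ max_e]] := greedy_step (ltnW hj1).
have e'S' : e' \notin prefix j by apply: contra e'S; apply/subsetP/prefix_subS.
rewrite def_prefix in Pe'.
have := max_e e' e'S' (P_down (setUS _ (prefix_subS j)) Pe').
have := gain_antitone f_submod (prefix_subS j) e'S.
rewrite /incr def_prefix /gain; lra.
Qed.

Lemma blocked_prefix_subS j : blocked (prefix j) \subset blocked (prefix j.+1).
Proof.
have [hj|hj] := ltnP j (size s); last by rewrite !prefix_oversize // (leq_trans hj).
have [e0 [_ def_prefix Pe0 _]] := greedy_step hj.
apply/subsetP => e; rewrite [e \in blocked _]inE => /andP[eS NPe].
have ne : e != e0 by apply: contraNneq NPe => ->; rewrite -def_prefix.
rewrite [e \in blocked _]inE def_prefix in_setU1 negb_or ne eS /=.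
by apply: contra NPe; apply: P_down; rewrite setUS // -def_prefix prefix_subS.
Qed.

Let blocked_gain j := \sum_(e in blocked (prefix j)) w e * gain f (prefix j) e.
Let blocked_mass j := \sum_(e in blocked (prefix j)) w e.

Lemma blocked_gain_step j : (j < size s)%N ->
  blocked_gain j.+1 <= blocked_gain j + (blocked_mass j.+1 - blocked_mass j) * incr j.
Proof.
move=> hj; have [_ [_ _ _ max_gain]] := greedy_step hj.
have subB := blocked_prefix_subS j.
have gain_le e : e \in blocked (prefix j.+1) -> gain f (prefix j.+1) e <= gain f (prefix j) e.
  by rewrite inE => /andP[eS _]; have := gain_antitone f_submod (prefix_subS j) eS.
rewrite /blocked_gain /blocked_mass.
rewrite !(big_setID (A := blocked (prefix j.+1)) (blocked (prefix j))) /=.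
rewrite !(setIidPr subB) [X in X - _]addrC addrK mulr_suml lerD //.
  apply: ler_sum => e eB; rewrite ler_wpM2l // gain_le //; exact: (subsetP subB).
apply: ler_sum => e /setDP[eB eNB].
have eS : e \notin prefix j.
  move: eB; rewrite [e \in blocked _]inE => /andP[eS _].
  by apply: contra eS; apply/subsetP/prefix_subS.
rewrite [e \in blocked _]inE eS negbK in eNB.
by rewrite ler_wpM2l //; apply: le_trans (gain_le e eB) (max_gain e eS eNB).
Qed.

(* The unspent capacity |prefix j| - blocked_mass j, priced at the current increment,
   pays for the elements blocked later, whose gains are at most that increment. *)
Lemma charging_invariant j : (j <= size s)%N ->
  blocked_gain j + (#|prefix j|%:R - blocked_mass j) * incr j <= f (prefix j) - f set0.
Proof.
elim: j => [_|j IH hj].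
  have mass0 : blocked_mass 0 = 0.
    apply/eqP; rewrite eq_le sumr_ge0 ?andbT //.
    by have := blocked_weight P0; rewrite /blocked_mass prefix0 cards0.
  have gain0 : blocked_gain 0 = 0.
    rewrite /blocked_gain big1 // => e eB.
    by rewrite (psumr_eq0P (fun e _ => w_ge0 e) mass0 eB) mul0r.
  by rewrite gain0 mass0 prefix0 cards0 subr0 mul0r add0r subrr.
have gain_step := blocked_gain_step hj.
have card_prefix : #|prefix j.+1|%:R = #|prefix j|%:R + 1 :> R.
  have [e [eS -> _ _]] := greedy_step hj.
  by rewrite cardsU1 eS natrD addrC.
have split_incr : f (prefix j.+1) - f set0 = f (prefix j) - f set0 + incr j.
  by rewrite /incr; ring.
have slack : 0 <= (#|prefix j.+1|%:R - blocked_mass j.+1) * (incr j - incr j.+1).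
  by apply: mulr_ge0; rewrite subr_ge0 ?incr_antitone ?blocked_weight ?P_prefix.
move: (IH (ltnW hj)) gain_step slack; rewrite split_incr card_prefix; nra.
Qed.

Lemma P_greedy : P [set v in s].
Proof. by rewrite -(prefix_oversize (leqnn _)) P_prefix. Qed.

Lemma greedy_charging :
  \sum_(e in ~: [set v in s]) w e * gain f [set v in s] e <= f [set v in s] - f set0.
Proof.
set A := [set v in s].
have prefixA : prefix (size s) = A by rewrite prefix_oversize.
have blockedA : blocked A = ~: A.
  apply/setP => e; rewrite [e \in blocked _]inE in_setC.
  by case: (boolP (e \in A)) => //= eA; apply: s_greedy.2.
have := charging_invariant (leqnn (size s)).
have -> : incr (size s) = 0 by rewrite /incr !prefix_oversize ?subrr.
by rewrite mulr0 addr0 /blocked_gain prefixA blockedA.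
Qed.

End GreedyCharging.

Section PartitionFamily.
Variables (R : realType) (V : finType) (m : nat) (grp : V -> 'I_m).
Variables (alpha beta : 'I_m -> R) (b : nat).

Local Notation lo t := (Num.floor (alpha t)).
Local Notation hi t := (Num.ceil (beta t)).

Definition gcard (A : {set V}) (t : 'I_m) : int := #|A :&: group_of grp t|%:Z.

Definition load (A : {set V}) : int := \sum_(t < m) Num.max (lo t) (gcard A t).

Definition in_Ib (A : {set V}) : bool := [forall t, gcard A t <= hi t] && (load A <= b%:Z).

Lemma in_IP (A : {set V}) : reflect (in_I grp alpha beta b A) (in_Ib A).
Proof.
by apply: (iffP andP) => [[/forallP h1 h2]|[h1 h2]]; split=> //; apply/forallP.
Qed.

Lemma gcard_setU1 (e : V) (A : {set V}) t : e \notin A ->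
  gcard (e |: A) t = if grp e == t then gcard A t + 1 else gcard A t.
Proof.
move=> eA; rewrite /gcard setIUl; case: eqP => [<-|ne].
  rewrite (setIidPl _) ?sub1set ?inE // cardsU1 inE (negbTE eA); lia.
rewrite (_ : [set e] :&: _ = set0) ?set0U //.
by apply/setP=> v; rewrite !inE; apply/negP => /andP[/eqP -> /eqP].
Qed.

Lemma gcardS (A B : {set V}) t : B \subset A -> gcard B t <= gcard A t.
Proof. by move=> sBA; rewrite lez_nat subset_leq_card // setSI. Qed.

Lemma in_Ib_subset (A B : {set V}) : B \subset A -> in_Ib A -> in_Ib B.
Proof.
move=> sBA /andP[/forallP hiA loadA]; apply/andP; split.
  by apply/forallP => t; apply: le_trans (gcardS t sBA) (hiA t).
apply: le_trans loadA; apply: ler_sum => t _.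
by rewrite ge_max le_max lexx le_max (gcardS t sBA) orbT.
Qed.

Lemma card_groups (A : {set V}) : (\sum_(t < m) #|A :&: group_of grp t|)%N = #|A|.
Proof.
rewrite -sum1_card (partition_big grp xpredT) //=; apply: eq_bigr => t _.
by rewrite -sum1_card; apply: eq_bigl => e; rewrite !inE.
Qed.

Lemma load_setU1 (e : V) (A : {set V}) : e \notin A ->
  load (e |: A) = load A - Num.max (lo (grp e)) (gcard A (grp e))
                  + Num.max (lo (grp e)) (gcard A (grp e) + 1).
Proof.
move=> eA; rewrite /load (bigD1 (grp e)) //= [in RHS](bigD1 (grp e)) //=.
rewrite gcard_setU1 // eqxx (eq_bigr (fun t => Num.max (lo t) (gcard A t))).
  by ring.
by move=> t /negbTE nt; rewrite gcard_setU1 // eq_sym nt.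
Qed.

Lemma in_Ib_setU1 (e : V) (A : {set V}) : in_Ib A -> e \notin A ->
  gcard A (grp e) < hi (grp e) ->
  (gcard A (grp e) < lo (grp e)) || (load A < b%:Z) -> in_Ib (e |: A).
Proof.
move=> /andP[/forallP hiA loadA] eA hi_e lo_or_load; apply/andP; split.
  by apply/forallP => t; rewrite gcard_setU1 //; case: eqP => [<-|_]; [lia | exact: hiA].
by rewrite load_setU1 //; move: lo_or_load loadA => /orP[]; lia.
Qed.

Lemma card_le_of_in_Ib (A : {set V}) : in_Ib A -> (#|A| <= b)%N.
Proof.
case/andP => _ loadA; rewrite -lez_nat -card_groups -natz natr_sum.
by apply: le_trans loadA; apply: ler_sum => t _; rewrite natz le_max lexx orbT.
Qed.

Definition saturated (A : {set V}) (t : 'I_m) : bool :=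
  (hi t <= gcard A t) || ((lo t <= gcard A t) && (b%:Z <= load A)).

Lemma blocked_saturated (A : {set V}) (e : V) :
  in_Ib A -> e \in blocked in_Ib A -> saturated A (grp e).
Proof.
move=> IA; rewrite inE => /andP[eA]; apply: contraNT; rewrite negb_or negb_and -!ltNge.
by case/andP=> hi_e lo_or_load; apply: in_Ib_setU1.
Qed.

Variable w : V -> R.
Hypotheses (w_ge0 : forall e, 0 <= w e) (w_le1 : forall e, w e <= 1).
Hypotheses (w_sum : \sum_e w e <= b%:R)
  (w_groups : forall t, alpha t <= \sum_(e in group_of grp t) w e <= beta t).

Local Notation gweight t := (\sum_(e in group_of grp t) w e).

Lemma lo_le_gweight t : (lo t)%:~R <= gweight t.
Proof. by apply: le_trans (floor_le _) _; case/andP: (w_groups t). Qed.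

Lemma gweight_le_hi t : gweight t <= (hi t)%:~R.
Proof. by apply: le_trans (ceil_ge _); case/andP: (w_groups t). Qed.

Lemma lo_le_hi t : lo t <= hi t.
Proof. by rewrite -(ler_int R); apply: le_trans (lo_le_gweight t) (gweight_le_hi t). Qed.

Lemma gweight_ge0 t : 0 <= gweight t.
Proof. exact: sumr_ge0. Qed.

Lemma sum_gweight : \sum_t gweight t = \sum_e w e.
Proof.
rewrite [RHS](partition_big grp xpredT) //=; apply: eq_bigr => t _.
by apply: eq_bigl => e; rewrite inE.
Qed.

Lemma in_Ib0 : in_Ib set0.
Proof.
have gcard0 t : gcard set0 t = 0 by rewrite /gcard set0I cards0.
apply/andP; split.
  apply/forallP => t; rewrite gcard0 -(ler_int R).
  exact: le_trans (gweight_ge0 t) (gweight_le_hi t).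
rewrite -(ler_int R) /load rmorph_sum /=; apply: le_trans w_sum.
rewrite -sum_gweight; apply: ler_sum => t _.
by rewrite gcard0 maxEle; case: ifP => _; [exact: gweight_ge0 | exact: lo_le_gweight].
Qed.

Lemma blocked_weight_group (A : {set V}) t : in_Ib A ->
  \sum_(e in blocked in_Ib A :&: group_of grp t) w e <=
  (gcard A t)%:~R + (if b%:Z <= load A then gweight t - (Num.max (lo t) (gcard A t))%:~R else 0).
Proof.
move=> IA; have le_sat : \sum_(e in blocked in_Ib A :&: group_of grp t) w e <=
    (if saturated A t then gweight t else 0).
  case: ifP => [_|unsat].
    rewrite (big_setID (A := group_of grp t) (blocked in_Ib A)) setIC /=.
    by rewrite lerDl sumr_ge0.
  rewrite big1 // => e /setIP[eB]; rewrite inE => /eqP ge.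
  by move: (blocked_saturated IA eB); rewrite ge unsat.
move: le_sat; rewrite /saturated maxEle.
have := lo_le_gweight t; have := gweight_le_hi t; have := lo_le_hi t.
have : (0 : R) <= (gcard A t)%:~R by [].
case: (leP (hi t) (gcard A t)) => hi_t; case: (leP (lo t) (gcard A t)) => lo_t;
  case: (leP b%:Z (load A)) => load_b /=; move: hi_t lo_t;
  rewrite -?(ler_int R) -?(ltr_int R); lra.
Qed.

Lemma blocked_weight_le_card (A : {set V}) : in_Ib A ->
  \sum_(e in blocked in_Ib A) w e <= #|A|%:R.
Proof.
move=> IA; have -> : \sum_(e in blocked in_Ib A) w e =
    \sum_t \sum_(e in blocked in_Ib A :&: group_of grp t) w e.
  rewrite (partition_big grp xpredT) //=; apply: eq_bigr => t _.
  by apply: eq_bigl => e; rewrite !inE.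
apply: (@le_trans _ _ (\sum_t ((gcard A t)%:~R +
    (if b%:Z <= load A then gweight t - (Num.max (lo t) (gcard A t))%:~R else 0)))).
  by apply: ler_sum => t _; apply: blocked_weight_group.
have -> : #|A|%:R = \sum_t (gcard A t)%:~R :> R by rewrite -card_groups natr_sum.
rewrite big_split /= -[X in _ <= X]addr0 lerD //.
case: (leP b%:Z (load A)) => [load_b|_]; last by rewrite big1.
rewrite sumrB sum_gweight subr_le0; apply: le_trans w_sum _.
have -> : \sum_t ((Num.max (lo t) (gcard A t))%:~R : R) = (load A)%:~R by rewrite rmorph_sum.
by rewrite -(ler_int R) in load_b.
Qed.

Lemma lo_le_gcard_of_maximal (A : {set V}) t : in_Ib A ->
  (forall e, e \notin A -> ~~ in_Ib (e |: A)) -> lo t <= gcard A t.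
Proof.
move=> IA maxA; rewrite leNgt; apply/negP => lt_t.
have lo_card : lo t <= #|group_of grp t|%:Z.
  rewrite -(ler_int R); apply: le_trans (lo_le_gweight t) _.
  change (gweight t <= #|group_of grp t|%:R).
  by rewrite -sum1_card natr_sum; apply: ler_sum => e _; apply: w_le1.
have /subsetPn[e eV eA] : ~~ (group_of grp t \subset A).
  by apply: contraTN lt_t => sub; rewrite -leNgt /gcard (setIidPr sub).
have ge : grp e = t by move: eV; rewrite inE => /eqP.
apply: (negP (maxA e eA)); apply: in_Ib_setU1; rewrite ?ge ?lt_t //.
exact: lt_le_trans lt_t (lo_le_hi t).
Qed.

End PartitionFamily.

Section FractionalCover.
Variables (R : realType) (V : finType) (b : nat) (x : {set V} -> R).
Hypotheses (x_ge0 : forall S : {set V}, (#|S| <= b)%N -> 0 <= x S)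
  (x_sum : \sum_(S : {set V} | (#|S| <= b)%N) x S <= 1).

Definition cover (e : V) : R := \sum_(S : {set V} | (#|S| <= b)%N) x S * (e \in S)%:R.

Lemma cover_ge0 e : 0 <= cover e.
Proof. by apply: sumr_ge0 => S bS; rewrite mulr_ge0 ?x_ge0. Qed.

Lemma cover_le1 e : cover e <= 1.
Proof.
apply: le_trans x_sum; apply: ler_sum => S bS.
by case: (e \in S); rewrite ?mulr1 ?mulr0 ?x_ge0.
Qed.

Lemma sum_cover (A : {set V}) :
  \sum_(e in A) cover e = \sum_(S : {set V} | (#|S| <= b)%N) x S * #|S :&: A|%:R.
Proof.
rewrite exchange_big /=; apply: eq_bigr => S _; rewrite -mulr_sumr -sum1_card natr_sum.
congr (_ * _); rewrite big_mkcond [RHS]big_mkcond /=; apply: eq_bigr => e _.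
by rewrite !inE; case: (e \in A); case: (e \in S).
Qed.

Lemma sum_cover_le : \sum_e cover e <= b%:R.
Proof.
rewrite -big_set /= sum_cover.
apply: le_trans (_ : _ <= \sum_(S : {set V} | (#|S| <= b)%N) x S * b%:R) _.
  by apply: ler_sum => S bS; rewrite setIT ler_wpM2l ?x_ge0 ?ler_nat.
by rewrite -mulr_suml ler_piMl.
Qed.

Variable f : {set V} -> R.
Hypotheses (f_ge0 : nonneg_fun f) (f_mono : monotone_fun f) (f_submod : submodular_fun f).

Lemma P0_value_le_cover (A : {set V}) :
  P0_value f b x <= f A + \sum_(e in ~: A) cover e * gain f A e.
Proof.
have f_le S : f S <= f A + \sum_(e in S :\: A) gain f A e.
  apply: le_trans (f_mono (_ : S \subset (S :\: A) :|: A)) (le_sum_gain f_submod _).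
    by apply/subsetP => v vS; rewrite !inE vS; case: (v \in A).
  by rewrite disjoints_subset setDE subsetIr.
have -> : \sum_(e in ~: A) cover e * gain f A e =
    \sum_(S : {set V} | (#|S| <= b)%N) x S * \sum_(e in S :\: A) gain f A e.
  under eq_bigr => e _ do rewrite /cover mulr_suml.
  rewrite exchange_big /=; apply: eq_bigr => S _.
  rewrite mulr_sumr [LHS]big_mkcond [RHS]big_mkcond /=; apply: eq_bigr => e _.
  by rewrite !inE; case: (e \in A); case: (e \in S); rewrite /= ?mulr0 ?mul0r ?mulr1.
rewrite /P0_value; apply: le_trans (_ : _ <= \sum_(S : {set V} | (#|S| <= b)%N)
    (x S * f A + x S * \sum_(e in S :\: A) gain f A e)) _.
  by apply: ler_sum => S bS; rewrite -mulrDr ler_wpM2l ?x_ge0 ?f_le.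
by rewrite big_split /= -mulr_suml lerD2r ler_piMl.
Qed.

End FractionalCover.

Lemma greedy_run_seq (R : realType) (V : finType) (m : nat) (f : {set V} -> R)
    (grp : V -> 'I_m) (alpha beta : 'I_m -> R) (b : nat) (s : seq V) :
  greedy_run f grp alpha beta b s -> greedy_seq f (in_Ib grp alpha beta b) s.
Proof.
case=> [steps maximal]; split=> [s1 s2 ei def_s|e eS]; last exact/in_IP/maximal.
have [eiS Iei max_ei] := steps _ _ _ def_s; split=> //; first exact/in_IP.
by move=> e eS /in_IP; apply: max_ei.
Qed.

Lemma sqr_1_sub_inv_expR1_le1 (R : realType) : (1 - (expR 1)^-1) ^+ 2 <= 1 :> R.
Proof.
have e_ge2 : 2 <= expR 1 :> R by have := expR_ge1Dx (1 : R); lra.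
have u_gt0 : 0 < (expR 1)^-1 :> R by rewrite invr_gt0; lra.
have u_le1 : (expR 1)^-1 <= 1 :> R by rewrite invr_le1 ?unitf_gt0; lra.
nra.
Qed.

Section GreedyOnPartition.
Variables (R : realType) (V : finType) (m : nat) (f : {set V} -> R) (grp : V -> 'I_m).
Variables (alpha beta : 'I_m -> R) (b : nat) (x : {set V} -> R) (s : seq V).
Hypotheses (x_feas : P0_feasible grp alpha beta b x) (s_greedy : greedy_run f grp alpha beta b s).

Let x_ge0 (S : {set V}) : (#|S| <= b)%N -> 0 <= x S.
Proof. by case: x_feas => x01 _ _ /x01 /andP[]. Qed.

Let x_sum : \sum_(S : {set V} | (#|S| <= b)%N) x S <= 1.
Proof. by case: x_feas. Qed.

Let cover_groups t : alpha t <= \sum_(e in group_of grp t) cover b x e <= beta t.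
Proof. by rewrite sum_cover; case: x_feas. Qed.

Let in_Ib0_cover : in_Ib grp alpha beta b set0.
Proof. exact: in_Ib0 (cover_ge0 x_ge0) (sum_cover_le x_ge0 x_sum) cover_groups. Qed.

Lemma in_Ib_greedy : in_Ib grp alpha beta b [set v in s].
Proof. exact: (P_greedy in_Ib0_cover (greedy_run_seq s_greedy)). Qed.

Lemma greedy_group_bounds t :
  Num.floor (alpha t) <= #|[set v in s] :&: group_of grp t|%:Z <= Num.ceil (beta t).
Proof.
apply/andP; split; last by case/andP: in_Ib_greedy => /forallP /(_ t).
apply: (lo_le_gcard_of_maximal (cover_le1 x_ge0 x_sum) cover_groups t in_Ib_greedy).
by case: (greedy_run_seq s_greedy).
Qed.

Hypotheses (f_ge0 : nonneg_fun f) (f_mono : monotone_fun f) (f_submod : submodular_fun f).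

Lemma P0_value_le_twice_greedy : P0_value f b x <= 2 * f [set v in s].
Proof.
have blocked_le := blocked_weight_le_card (cover_ge0 x_ge0) (sum_cover_le x_ge0 x_sum) cover_groups.
have := greedy_charging f_mono f_submod (@in_Ib_subset _ _ _ grp alpha beta b) in_Ib0_cover
  (cover_ge0 x_ge0) blocked_le (greedy_run_seq s_greedy).
by move: (P0_value_le_cover x_ge0 x_sum f_ge0 f_mono f_submod [set v in s]) (f_ge0 set0); lra.
Qed.

End GreedyOnPartition.

Theorem theorem2 (R : realType) (V : finType) (m : nat)
  (f : {set V} -> R) (grp : V -> 'I_m) (alpha beta : 'I_m -> R) (b : nat)
  (hf0 : nonneg_fun f) (hfm : monotone_fun f) (hfs : submodular_fun f)
  (halpha : forall t, 0 <= alpha t) (hbeta : forall t, 0 <= beta t)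
  (hb : (0 < b)%N)
  (x : {set V} -> R) (hx : P0_optimal f grp alpha beta b x)
  (s : seq V) (hs : greedy_run f grp alpha beta b s) :
  let Ag := [set v in s] in
  [/\ (#|Ag| <= b)%N,
      (forall t : 'I_m,
         Num.floor (alpha t) <= (#|Ag :&: group_of grp t|)%:Z <= Num.ceil (beta t))
    & (1 - (expR 1)^-1) ^+ 2 / 2 * P0_value f b x <= f Ag].
Proof.
move=> Ag; have [x_feas _] := hx.
split.
- exact: card_le_of_in_Ib (in_Ib_greedy x_feas hs).
- exact: greedy_group_bounds x_feas hs.
- have := P0_value_le_twice_greedy x_feas hs hf0 hfm hfs.
  have := sqr_1_sub_inv_expR1_le1 R; have := sqr_ge0 (1 - (expR 1)^-1 : R).
  by move: (hf0 Ag); nra.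
Qed.
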